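(* Let $q \geq 5$ be a prime power and let $\mathcal{X}$ be a plane curve of degree $q-1$ defined over $\mathbb{F}_q$ without $\mathbb{F}_q$-linear components with $\mathrm{N}_q(\mathcal{X}) = (q-1)^2$. If $P \in \mathcal{X}(\mathbb{F}_q)$, then $\psi_{q-1}(P) \geq 3$. In particular $a_{q-1} \geq 3(q-1)$. Moreover, if $\psi_{q-1}(P) = 3$, then among the $q+1$ lines of $\mathbb{P}^2(\mathbb{F}_q)$ through $P$, exactly $3$ contain $q-1$ points of $\mathcal{X}(\mathbb{F}_q)$ and the remaining $q-2$ contain exactly $q-2$ points of $\mathcal{X}(\mathbb{F}_q)$.
   Context: $\mathcal{X}(\mathbb{F}_q)=\mathcal{X}\cap\mathbb{P}^2(\mathbb{F}_q)$, $\mathrm{N}_q(\mathcal{X})=\#\mathcal{X}(\mathbb{F}_q)$; ''without $\mathbb{F}_q$-linear components'' means no line defined over $\mathbb{F}_q$ is a component. For $0\le i\le q+1$, $\mathcal{A}_i$ is the set of lines $l$ defined over $\mathbb{F}_q$ with $\#(l\cap\mathcal{X}(\mathbb{F}_q)) = i$, and $a_i = \#\mathcal{A}_i$. For a point $P \in \mathbb{P}^2(\mathbb{F}_q)$, $\psi_i(P)$ is the number of lines in $\mathcal{A}_i$ passing through $P$. *)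

From HB Require Import structures.
From mathcomp Require Import all_boot all_order all_algebra all_field.
From mathcomp Require Import mpoly.
Set Implicit Arguments. Unset Strict Implicit. Unset Printing Implicit Defensive.
Import Order.TTheory GRing.Theory.
Local Open Scope ring_scope.

Section PlaneCurves.
Variable K : finFieldType.

Definition vec3 := {ffun 'I_3 -> K}.

(* Canonical representative of a projective point (or line): nonzero vector
   whose first nonzero coordinate equals 1.  The points of P^2(F_q) are in
   bijection with the normalized vectors; so are the F_q-rational lines
   (via their coefficient vectors). *)
Definition normalized (v : vec3) : bool :=
  [exists i : 'I_3, (v i == 1) && [forall j : 'I_3, (j < i)%N ==> (v j == 0)]].

Definition incident (l P : vec3) : bool := \sum_(i < 3) l i * P i == 0.

Definition linear_form (a : vec3) : {mpoly K[3]} := \sum_(i < 3) a i *: 'X_i.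

Definition has_Fq_linear_component (F : {mpoly K[3]}) : Prop :=
  exists (a : vec3) (G : {mpoly K[3]}), a != 0 /\ F = linear_form a * G.

Definition ratpts (F : {mpoly K[3]}) : {set vec3} :=
  [set P : vec3 | normalized P & F.@[P] == 0].

Definition Nq (F : {mpoly K[3]}) : nat := #|ratpts F|.

Definition pts_on_line (F : {mpoly K[3]}) (l : vec3) : nat :=
  #|[set P in ratpts F | incident l P]|.

Definition a_ (F : {mpoly K[3]}) (i : nat) : nat :=
  #|[set l : vec3 | normalized l & pts_on_line F l == i]|.

Definition psi (F : {mpoly K[3]}) (i : nat) (P : vec3) : nat :=
  #|[set l : vec3 | [&& normalized l, incident l P & pts_on_line F l == i]]|.

End PlaneCurves.

From HB Require Import structures.
From mathcomp Require Import all_boot all_order all_algebra all_field.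
From mathcomp Require Import mpoly fingroup cyclic.
From mathcomp Require Import ring zify.
Import GRing.Theory.
Set Implicit Arguments. Unset Strict Implicit. Unset Printing Implicit Defensive.
Local Open Scope ring_scope.

(* Let q = #|K| and let X be the curve F = 0.  An F_q-line l meets X(F_q) in at most
   q - 1 points: a power-sum computation shows that F sums to zero over the q + 1
   points of l, so q points of X on l force all q + 1; then F vanishes on the plane
   l = 0 of F_q^3 and, having degree < q, is divisible by the linear form l.
   Now fix P in X(F_q).  The q + 1 lines through P partition the other
   N_q(X) - 1 = q(q - 2) rational points of X, so the numbers #(l ∩ X(F_q)) - 1 over
   these lines add up to q(q - 2).  Each is at most q - 2, and at most q - 3 unless
   l is in A_(q-1); hence q(q - 2) <= (q + 1)(q - 3) + psi_(q-1)(P), that is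
   psi_(q-1)(P) >= 3, and equality forces every line through P to carry q - 1 or
   q - 2 points.  Counting incidences between X(F_q) and A_(q-1) gives
   (q - 1) a_(q-1) = sum_P psi_(q-1)(P) >= 3 (q - 1)^2. *)

Section PowerSums.
Variable K : finFieldType.
Local Notation q := #|K|.

Lemma card_finField_pred_gt0 : (0 < q.-1)%N.
Proof. by rewrite -subn1 subn_gt0 finNzRing_gt1. Qed.

Lemma natr_card : q%:R = 0 :> K.
Proof. by rewrite -FinRing.zmodXgE -cardsT (@expg_cardG _ [set: K]%G) ?inE. Qed.

Lemma natr_card_pred : q.-1%:R = -1 :> K.
Proof.
apply/eqP; rewrite -subr_eq0 opprK natr1 prednK ?natr_card //.
exact: ltnW (finNzRing_gt1 K).
Qed.

Lemma expf_card_pred (a : K) : a != 0 -> a ^+ q.-1 = 1.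
Proof.
move=> a_nz; apply: (mulIf a_nz); rewrite mul1r -exprSr prednK ?expf_card //.
exact: ltnW (finNzRing_gt1 K).
Qed.

Lemma exists_expf_neq1 n : (0 < n < q.-1)%N -> exists2 a : K, a != 0 & a ^+ n != 1.
Proof.
case/andP=> n_gt0 n_lt.
have [a /andP[a_nz an_neq1] | an_eq1] := pickP (fun a : K => (a != 0) && (a ^+ n != 1)).
  by exists a.
have p_nz : 'X^n - 1%:P != 0 :> {poly K} by rewrite -size_poly_eq0 size_XnsubC.
have roots : all (root ('X^n - 1%:P)) (enum (predC1 (0 : K))).
  apply/allP => a; rewrite mem_enum => /negPf a_nz.
  have := an_eq1 a; rewrite a_nz /= => /negbFE/eqP an1.
  by rewrite rootE !hornerE an1 subrr.
have := max_poly_roots p_nz roots (enum_uniq _).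
by rewrite size_XnsubC // -cardE cardC1 ltnS leqNgt n_lt.
Qed.

Definition power_sum (j : nat) : K := \sum_(a : K) a ^+ j.

Lemma power_sum_card_pred : power_sum q.-1 = -1.
Proof.
rewrite /power_sum (bigD1 0) //= expr0n gtn_eqF ?card_finField_pred_gt0 // add0r.
rewrite (eq_bigr (fun=> 1)) => [|a]; last exact: expf_card_pred.
by rewrite sumr_const cardC1 natr_card_pred.
Qed.

Lemma power_sum_small j : (j < q.-1)%N -> power_sum j = 0.
Proof.
case: j => [|j] j_lt.
  by rewrite /power_sum (eq_bigr (fun=> 1)) ?sumr_const ?natr_card // => a; rewrite expr0.
have [a a_nz aj_neq1] := @exists_expf_neq1 j.+1 j_lt.
(* x |-> a x permutes K *)
have : power_sum j.+1 = a ^+ j.+1 * power_sum j.+1.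
  rewrite /power_sum mulr_sumr (reindex_inj (mulfI a_nz)) /=.
  by apply: eq_bigr => x _; rewrite exprMn.
move/eqP; rewrite -subr_eq0 -{1}(mul1r (power_sum _)) -mulrBl mulf_eq0 subr_eq0.
by rewrite eq_sym (negbTE aj_neq1) => /eqP.
Qed.

End PowerSums.

Section MultinomialDegree.
Variable n : nat.
Implicit Types m : 'X_{1.. n}.

Lemma mnm_leq_mdeg m i : (m i <= mdeg m)%N.
Proof. by rewrite mdegE (bigD1 i) //= leq_addr. Qed.

Lemma exists_mnm_ltn_of_mdeg m k : (mdeg m < n * k)%N -> exists i, (m i < k)%N.
Proof.
move=> deg_lt; apply/existsP; move: deg_lt; apply: contraLR.
rewrite negb_exists => /forallP m_ge.
rewrite mdegE -[n in (n * k)%N]card_ord -sum_nat_const -leqNgt.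
by apply: leq_sum => i _; rewrite leqNgt m_ge.
Qed.

Lemma exists_mnm_ltn m m' : (mdeg m <= mdeg m')%N -> m != m' -> exists i, (m i < m' i)%N.
Proof.
move=> deg_le m_neq; apply/existsP; move: m_neq; apply: contraLR.
rewrite negb_exists negbK => /forallP m_ge.
have le_m i : (m' i <= m i)%N by rewrite leqNgt m_ge.
apply/eqP/mnmP => i; apply/eqP; rewrite eqn_leq le_m andbT.
move: deg_le; rewrite !mdegE (bigD1 i) //= [X in (_ <= X)%N](bigD1 i) //=.
have : (\sum_(j < n | j != i) m' j <= \sum_(j < n | j != i) m j)%N.
  by apply: leq_sum => j _; apply: le_m.
by move=> sum_le /leq_trans/(_ (leq_add (leqnn _) sum_le)); rewrite leq_add2r.
Qed.

End MultinomialDegree.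

Section SumsOverAffineSpace.
Variables (K : finFieldType) (n : nat).
Local Notation q := #|K|.
Local Notation S := (power_sum K).

Lemma sum_meval_mul_monomial (p : {mpoly K[n]}) (e : 'I_n -> nat) :
  \sum_(x : {ffun 'I_n -> K}) p.@[x] * \prod_i x i ^+ e i
  = \sum_(m <- msupp p) p@_m * \prod_i S (m i + e i).
Proof.
under eq_bigr do rewrite mevalE mulr_suml.
rewrite exchange_big /=; apply: eq_bigr => m _.
under eq_bigr do rewrite -mulrA.
rewrite -mulr_sumr bigA_distr_bigA /=; congr (_ * _); apply: eq_bigr => x _.
by rewrite -big_split /=; apply: eq_bigr => i _; rewrite exprD.
Qed.

Lemma sum_meval_eq0 (p : {mpoly K[n]}) :
  (msize p <= n * q.-1)%N -> \sum_(x : {ffun 'I_n -> K}) p.@[x] = 0.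
Proof.
move=> size_p.
transitivity (\sum_(x : {ffun 'I_n -> K}) p.@[x] * \prod_i x i ^+ (fun=> 0%N) i).
  by apply: eq_bigr => x _; rewrite big1 ?mulr1 // => i _; rewrite expr0.
rewrite sum_meval_mul_monomial big1_seq // => m /andP[_ m_supp].
have [i small_i] : exists i, (m i < q.-1)%N.
  by apply: exists_mnm_ltn_of_mdeg; apply: leq_trans (msize_mdeg_lt m_supp) size_p.
by rewrite (bigD1 i) //= addn0 power_sum_small ?mul0r ?mulr0.
Qed.

(* The coefficient of the leading monomial x^m is recovered (up to sign) as the
   sum of p(x) x^(q-1-m) over K^n. *)
Lemma vanishing_mpoly_eq0 (p : {mpoly K[n]}) :
  (msize p <= q)%N -> (forall x : {ffun 'I_n -> K}, p.@[x] = 0) -> p = 0.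
Proof.
move=> size_p p_vanish; apply/eqP; apply: contraT => p_nz.
set ms := mlead p.
have deg_ms : (mdeg ms <= q.-1)%N by rewrite -ltnS prednK ?mlead_deg // ltnW ?finNzRing_gt1.
pose e i := (q.-1 - ms i)%N.
have := sum_meval_mul_monomial p e.
rewrite big1 => [|x _]; last by rewrite p_vanish mul0r.
have others : \sum_(m <- msupp p | m != ms) p@_m * \prod_i S (m i + e i) = 0.
  rewrite big_seq_cond big1 // => m /andP[m_supp m_neq].
  have deg_m : (mdeg m <= mdeg ms)%N by rewrite -ltnS mlead_deg ?msize_mdeg_lt.
  have [i lt_i] := exists_mnm_ltn deg_m m_neq.
  rewrite (bigD1 i) //= power_sum_small ?mul0r ?mulr0 // /e.
  by have := mnm_leq_mdeg ms i; lia.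
rewrite (bigD1_seq ms) ?mlead_supp ?msupp_uniq //= others addr0.
rewrite (eq_bigr (fun=> -1)) => [|i _]; last first.
  by rewrite /e subnKC ?power_sum_card_pred // (leq_trans (mnm_leq_mdeg _ _)).
rewrite prodr_const => /esym/eqP; rewrite mulf_eq0 signr_eq0 orbF mleadc_eq0.
by rewrite (negbTE p_nz).
Qed.

End SumsOverAffineSpace.

Local Notation i0 := (@Ordinal 3 0 isT).
Local Notation i1 := (@Ordinal 3 1 isT).
Local Notation i2 := (@Ordinal 3 2 isT).

Lemma ord3_cases (j : 'I_3) : [\/ j = i0, j = i1 | j = i2].
Proof.
by case: j => [[|[|[|//]]] ?]; [constructor 1 | constructor 2 | constructor 3]; apply: val_inj.
Qed.

Lemma sum_ord3 (V : nmodType) (f : 'I_3 -> V) : \sum_(i < 3) f i = f i0 + f i1 + f i2.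
Proof. by rewrite !big_ord_recr big_ord0 /= add0r; congr (f _ + f _ + f _); apply: val_inj. Qed.

Lemma ffun_neq0 (I : finType) (V : nmodType) (v : {ffun I -> V}) :
  v != 0 -> exists i, v i != 0.
Proof.
move=> v_nz; apply/existsP; apply: contraNT v_nz; rewrite negb_exists => /forallP v0.
by apply/eqP/ffunP => i; rewrite ffunE; apply/eqP; rewrite -[_ == _]negbK v0.
Qed.

Section Coordinates.
Variable K : finFieldType.
Implicit Types (u v w l x P Q : vec3 K) (c d : K).

Lemma vec3_ext u v : u i0 = v i0 -> u i1 = v i1 -> u i2 = v i2 -> u = v.
Proof. by move=> e0 e1 e2; apply/ffunP => j; case: (ord3_cases j) => ->. Qed.

Definition scalev c v : vec3 K := [ffun i => c * v i].
Definition dot u v : K := \sum_(i < 3) u i * v i.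
Definition delta (i : 'I_3) : vec3 K := [ffun j => (j == i)%:R].
Definition pivot v : K := if v i0 != 0 then v i0 else if v i1 != 0 then v i1 else v i2.
Definition normalize v : vec3 K := scalev (pivot v)^-1 v.

Lemma incidentE l P : incident l P = (dot l P == 0).
Proof. by []. Qed.

Lemma dotE u v : dot u v = u i0 * v i0 + u i1 * v i1 + u i2 * v i2.
Proof. exact: sum_ord3. Qed.

Lemma dotC u v : dot u v = dot v u.
Proof. by rewrite !dotE; ring. Qed.

Lemma dotZr u c v : dot u (scalev c v) = c * dot u v.
Proof. by rewrite !dotE !ffunE; ring. Qed.

Lemma dot0r u : dot u 0 = 0.
Proof. by rewrite dotE !ffunE; ring. Qed.

Lemma dot_deltar u i : dot u (delta i) = u i.
Proof.
rewrite /dot (bigD1 i) //= big1 => [|j j_neq]; last by rewrite ffunE (negbTE j_neq) mulr0.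
by rewrite ffunE eqxx mulr1 addr0.
Qed.

Lemma scalevA c d v : scalev c (scalev d v) = scalev (c * d) v.
Proof. by apply/ffunP => i; rewrite !ffunE mulrA. Qed.

Lemma scale1v v : scalev 1 v = v.
Proof. by apply/ffunP => i; rewrite !ffunE mul1r. Qed.

Lemma scale0v v : scalev 0 v = 0.
Proof. by apply/ffunP => i; rewrite !ffunE mul0r. Qed.

Lemma pivotZ c v : pivot (scalev c v) = c * pivot v.
Proof.
rewrite /pivot !ffunE; have [->|c_nz] := eqVneq c 0; first by rewrite !mul0r eqxx.
by rewrite !mulf_eq0 (negbTE c_nz) /=; case: ifP => //; case: ifP.
Qed.

Lemma pivot_eq0 v : (pivot v == 0) = (v == 0).
Proof.
apply/idP/eqP => [|->]; last by rewrite /pivot !ffunE eqxx.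
rewrite /pivot; case: ifPn => [/negbTE-> // | /negPn/eqP v0].
case: ifPn => [/negbTE-> // | /negPn/eqP v1 /eqP v2].
by apply: vec3_ext; rewrite ffunE.
Qed.

Lemma normalizedE v : normalized v = (pivot v == 1).
Proof.
apply/existsP/idP => [[i /andP[/eqP vi1 /forallP v_before]] | piv1].
  have v0 (j : 'I_3) : (j < i)%N -> v j = 0 by move=> lt_ji; apply/eqP/(implyP (v_before j)).
  case: (ord3_cases i) vi1 v0 => -> vi1 v0; rewrite /pivot.
  - by rewrite vi1 oner_neq0.
  - by rewrite (v0 i0) // eqxx vi1 oner_neq0.
  - by rewrite (v0 i0) // (v0 i1) // eqxx vi1.
move: piv1; rewrite /pivot.
case: ifPn => [_ /eqP v0 | /negPn v0]; first by exists i0; rewrite v0 eqxx; apply/forallP.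
case: ifPn => [_ /eqP v1 | /negPn v1 /eqP v2].
  exists i1; rewrite v1 eqxx; apply/forallP => j; apply/implyP.
  by case: (ord3_cases j) => ->.
exists i2; rewrite v2 eqxx; apply/forallP => j; apply/implyP.
by case: (ord3_cases j) => ->.
Qed.

Lemma normalized_neq0 v : normalized v -> v != 0.
Proof. by rewrite normalizedE -pivot_eq0 => /eqP ->; rewrite oner_neq0. Qed.

Lemma normalize_normalized v : v != 0 -> normalized (normalize v).
Proof. by rewrite -pivot_eq0 normalizedE /normalize pivotZ => v_nz; rewrite mulVf. Qed.

Lemma scalev_pivot_normalize v : v != 0 -> scalev (pivot v) (normalize v) = v.
Proof. by rewrite -pivot_eq0 => v_nz; rewrite /normalize scalevA mulfV // scale1v. Qed.

Lemma normalized_scalev_eq c P Q :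
  normalized P -> normalized Q -> Q = scalev c P -> Q = P.
Proof.
rewrite !normalizedE => /eqP pivP /eqP pivQ QcP.
have := pivotZ c P; rewrite -QcP pivP pivQ mulr1 => c1.
by rewrite QcP -c1 scale1v.
Qed.

Lemma scalev_injl v : v != 0 -> injective (scalev^~ v).
Proof. by rewrite -pivot_eq0 => v_nz c d /(congr1 pivot); rewrite !pivotZ => /(mulIf v_nz). Qed.

Lemma scalev_eq0 c v : (scalev c v == 0) = (c == 0) || (v == 0).
Proof. by rewrite -!pivot_eq0 pivotZ mulf_eq0. Qed.

End Coordinates.

Arguments delta {K} i.

Section CrossProduct.
Variable K : finFieldType.
Implicit Types (u v w l P Q : vec3 K).

Definition cross u v : vec3 K := [ffun i =>
  match nat_of_ord i with
  | 0 => u i1 * v i2 - u i2 * v i1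
  | 1 => u i2 * v i0 - u i0 * v i2
  | _ => u i0 * v i1 - u i1 * v i0
  end].

Lemma dot_cross_l u v : dot u (cross u v) = 0.
Proof. by rewrite dotE !ffunE /=; ring. Qed.

Lemma dot_cross_r u v : dot v (cross u v) = 0.
Proof. by rewrite dotE !ffunE /=; ring. Qed.

Lemma cross_crossE u v w t : cross u (cross v w) t = v t * dot u w - w t * dot u v.
Proof. by rewrite !dotE; case: (ord3_cases t) => ->; rewrite !ffunE /=; ring. Qed.

Lemma cross_eq0 u v : u != 0 -> cross u v = 0 -> exists c, v = scalev c u.
Proof.
move=> u_nz uv0; have [i ui_nz] := ffun_neq0 u_nz.
exists (v i / u i); apply/ffunP => t; rewrite ffunE.
have cross0 : cross (delta i) 0 = 0.
  by apply/ffunP => j; rewrite !ffunE; case: (nat_of_ord j) => [|[|?]]; rewrite !mulr0 subrr.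
have /esym := cross_crossE (delta i) u v t.
rewrite uv0 cross0 ffunE ![dot (delta i) _]dotC !dot_deltar => /eqP.
by rewrite subr_eq0 => /eqP uv; rewrite mulrAC [v i * _]mulrC uv mulfK.
Qed.

Lemma cross_neq0 P Q : normalized P -> normalized Q -> P != Q -> cross P Q != 0.
Proof.
move=> nP nQ PQ; apply/eqP => /(cross_eq0 (normalized_neq0 nP)) [c QcP].
by move: PQ; rewrite (normalized_scalev_eq nP nQ QcP) eqxx.
Qed.

Lemma exists_line_through P Q : normalized P -> normalized Q -> P != Q ->
  exists l, [&& normalized l, incident l P & incident l Q].
Proof.
move=> nP nQ PQ; have PQ_nz := cross_neq0 nP nQ PQ.
exists (normalize (cross P Q)); rewrite normalize_normalized //= !incidentE.
by rewrite !(dotC (normalize _)) !dotZr dot_cross_l dot_cross_r mulr0 eqxx.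
Qed.

Lemma line_through_unique l l' P Q : normalized l -> normalized l' ->
  normalized P -> normalized Q -> P != Q ->
  incident l P -> incident l Q -> incident l' P -> incident l' Q -> l' = l.
Proof.
move=> nl nl' nP nQ PQ /eqP lP /eqP lQ /eqP l'P /eqP l'Q.
have PQ_nz := cross_neq0 nP nQ PQ.
have on_line k : normalized k -> dot k P = 0 -> dot k Q = 0 -> exists c, cross P Q = scalev c k.
  move=> nk kP kQ; apply: (cross_eq0 (normalized_neq0 nk)); apply/ffunP => t.
  by rewrite cross_crossE kP kQ !mulr0 subrr ffunE.
have [c PQl] := on_line l nl lP lQ; have [c' PQl'] := on_line l' nl' l'P l'Q.
have c'_nz : c' != 0 by apply: contraNneq PQ_nz => c'0; rewrite PQl' c'0 scale0v.
apply: (normalized_scalev_eq (c := c'^-1 * c) nl nl').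
by rewrite -scalevA -PQl PQl' scalevA mulVf // scale1v.
Qed.

End CrossProduct.

Section Counting.
Variable K : finFieldType.
Local Notation q := #|K|.
Implicit Types (a x P : vec3 K).

Lemma sum_scale_invariant (V : nmodType) (S : pred (vec3 K)) (g : vec3 K -> V) :
  (forall c x, c != 0 -> S x -> S (scalev c x)) ->
  (forall c x, c != 0 -> g (scalev c x) = g x) ->
  \sum_(x : vec3 K | (x != 0) && S x) g x
  = (\sum_(P : vec3 K | normalized P && S P) g P) *+ q.-1.
Proof.
move=> S_scale g_scale.
rewrite (partition_big (@normalize K) (fun P => normalized P && S P)); last first.
  move=> x /andP[x_nz Sx]; rewrite normalize_normalized //.
  by rewrite S_scale // invr_eq0 pivot_eq0.
rewrite -sumrMnl; apply: eq_bigr => P /andP[nP SP].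
have P_nz := normalized_neq0 nP.
have -> : \sum_(x : vec3 K | (x != 0) && S x && (normalize x == P)) g x =
          \sum_(x in [set scalev c P | c in predC1 0]) g x.
  apply: eq_bigl => x; apply/idP/imsetP => [/andP[/andP[x_nz _] /eqP <-] | [c c_nz ->]].
    by exists (pivot x); rewrite ?scalev_pivot_normalize // inE /= pivot_eq0.
  move: nP c_nz; rewrite normalizedE inE /= => /eqP pivP c_nz.
  rewrite scalev_eq0 negb_or c_nz P_nz S_scale //=.
  by rewrite /normalize pivotZ pivP mulr1 scalevA mulVf // scale1v.
rewrite big_imset /=; last by move=> c d _ _; apply: scalev_injl.
rewrite (eq_bigr (fun=> g P)) => [|c]; last by rewrite inE => c_nz; apply: g_scale.
by rewrite sumr_const cardC1.
Qed.

Lemma card_hyperplane_le n (a : {ffun 'I_n.+1 -> K}) : a != 0 ->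
  (#|[set x : {ffun 'I_n.+1 -> K} | (\sum_i a i * x i == 0)%R]| <= q ^ n)%N.
Proof.
move=> a_nz; have [i ai_nz] := ffun_neq0 a_nz; set H := [set x : {ffun 'I_n.+1 -> K} | _].
pose drop_i (x : {ffun 'I_n.+1 -> K}) := [ffun j => x (lift i j)].
have drop_inj : {in H &, injective drop_i}.
  move=> x y; rewrite !inE => /eqP ax /eqP ay /ffunP xy.
  have off_i j : j != i -> x j = y j.
    by rewrite eq_sym => /unlift_some[k -> _]; have := xy k; rewrite !ffunE.
  apply/ffunP => j; have [-> {j} | /off_i //] := eqVneq j i.
  rewrite (bigD1 i) //= (eq_bigr (fun j => a j * y j)) in ax => [|j /off_i -> //].
  rewrite (bigD1 i) //= in ay.
  by apply: (mulfI ai_nz); apply: (addIr (\sum_(j | j != i) a j * y j)); rewrite ax ay.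
rewrite -(card_in_imset drop_inj); apply: leq_trans (max_card _) _.
by rewrite card_ffun card_ord.
Qed.

Lemma card_line_le a : a != 0 ->
  (#|[set P | normalized P && (dot a P == 0)%R]| <= q.+1)%N.
Proof.
move=> a_nz; set L := [set P | _]; set H := [set x : vec3 K | (\sum_i a i * x i == 0)%R].
have S_scale c x : c != 0 -> dot a x == 0 -> dot a (scalev c x) == 0.
  by move=> _ /eqP ax; rewrite dotZr ax mulr0.
have punctured : #|H :\ (0 : vec3 K)| = (#|L| * q.-1)%N.
  have := sum_scale_invariant (V := nat) (g := fun=> 1%N) S_scale (fun _ _ _ => erefl).
  rewrite !sum1_card -mulr_natr natn natrME => card_eq.
  rewrite (@eq_card _ _ (fun x : vec3 K => (x != 0) && (dot a x == 0))) => [|x].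
    by rewrite card_eq; congr (_ * _)%N; apply: eq_card => P; rewrite inE.
  by rewrite !inE.
have := card_hyperplane_le a_nz; rewrite -/H (cardsD1 (0 : vec3 K)) punctured inE.
rewrite big1 => [|i _]; last by rewrite ffunE mulr0.
rewrite eqxx -(ltn_predK (finNzRing_gt1 K)) /=; have := card_finField_pred_gt0 K.
move: (#|K|.-1) => p; nia.
Qed.

End Counting.

Section Congruence.
Variables (R : comPzRingType) (d : R).

Definition eqmod (a b : R) := exists g, a - b = d * g.

Lemma eqmod_refl a : eqmod a a.
Proof. by exists 0; rewrite subrr mulr0. Qed.

Lemma eqmodD a b a' b' : eqmod a b -> eqmod a' b' -> eqmod (a + a') (b + b').
Proof. by move=> [g e] [g' e']; exists (g + g'); rewrite mulrDr -e -e'; ring. Qed.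

Lemma eqmodM a b a' b' : eqmod a b -> eqmod a' b' -> eqmod (a * a') (b * b').
Proof.
by move=> [g e] [g' e']; exists (g * a' + b * g'); rewrite mulrDr mulrA -e mulrCA -e'; ring.
Qed.

Lemma eqmodX a b k : eqmod a b -> eqmod (a ^+ k) (b ^+ k).
Proof.
move=> ab; elim: k => [|k IH]; first exact: eqmod_refl.
by rewrite !exprS; apply: eqmodM.
Qed.

End Congruence.

Section MpolySize.
Variables (R : idomainType) (n : nat).
Implicit Types (p r : {mpoly R[n]}).

Lemma msizeM_leq p r : (msize (p * r) <= (msize p + msize r).-1)%N.
Proof.
have [->|p_nz] := eqVneq p 0; first by rewrite mul0r msize0.
have [->|r_nz] := eqVneq r 0; first by rewrite mulr0 msize0.
by rewrite msizeM.
Qed.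

Lemma msizeX_leq p k : (msize (p ^+ k) <= ((msize p).-1 * k).+1)%N.
Proof.
elim: k => [|k IH]; first by rewrite expr0 msize1.
by rewrite exprS; apply: leq_trans (msizeM_leq _ _) _; rewrite mulnS; move: IH; lia.
Qed.

Lemma msize_prodX_leq (t : n.-tuple {mpoly R[n]}) (m : 'X_{1.. n}) :
  (forall i, msize (tnth t i) <= 2)%N ->
  (msize (\prod_(i < n) tnth t i ^+ m i) <= (mdeg m).+1)%N.
Proof.
move=> t_lin; rewrite mdegE; elim/big_rec2: _ => [|i k r _ size_r]; first by rewrite msize1.
apply: leq_trans (msizeM_leq _ _) _; have := msizeX_leq (tnth t i) (m i).
by have := t_lin i; move: size_r; nia.
Qed.

Lemma msize_comp_mpoly_leq p (t : n.-tuple {mpoly R[n]}) :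
  (forall i, msize (tnth t i) <= 2)%N -> (msize (p \mPo t) <= msize p)%N.
Proof.
move=> t_lin; rewrite comp_mpolyEX big_seq; apply: (big_ind (fun r => msize r <= msize p)%N).
- by rewrite msize0.
- by move=> r r' ? ? /=; apply: leq_trans (msizeD_le _ _) _; rewrite geq_max; apply/andP.
move=> m m_supp; apply: leq_trans (msizeZ_le _ _) (leq_trans _ (msize_mdeg_lt m_supp)).
by rewrite comp_mpolyX; apply: msize_prodX_leq.
Qed.

Lemma msize_dhomog p k : p \is k.-homog -> (msize p <= k.+1)%N.
Proof.
move=> /dhomogP p_homog; have [->|p_nz] := eqVneq p 0; first by rewrite msize0.
by rewrite -mlead_deg // p_homog // mlead_supp.
Qed.

End MpolySize.

Lemma comp_mpoly_eqmod (R : comNzRingType) n (L p : {mpoly R[n]}) (t : n.-tuple {mpoly R[n]}) :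
  (forall i, eqmod L 'X_i (tnth t i)) -> eqmod L p (p \mPo t).
Proof.
move=> t_eqmod; rewrite {1}[p]mpolyE comp_mpolyEX.
apply: (big_ind2 (eqmod L)) => [|? ? ? ?|m _]; [exact: eqmod_refl | exact: eqmodD |].
rewrite -!mul_mpolyC comp_mpolyX mpolyXE_id; apply: eqmodM; first exact: eqmod_refl.
apply: (big_ind2 (eqmod L)) => [|? ? ? ?|i _]; [exact: eqmod_refl | exact: eqmodM |].
exact: eqmodX.
Qed.

Section LinearForms.
Variable K : finFieldType.
Local Notation q := #|K|.
Implicit Types (F : {mpoly K[3]}) (l x : vec3 K).

Lemma meval_dhomogZ F d c x : F \is d.-homog -> F.@[scalev c x] = c ^+ d * F.@[x].
Proof.
move=> /dhomogP F_homog; rewrite !mevalE mulr_sumr; apply: eq_big_seq => m m_supp.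
under eq_bigr do rewrite ffunE exprMn.
by rewrite big_split /= prodrXr -mdegE F_homog //; ring.
Qed.

Lemma meval_dhomog0 F d : F \is d.-homog -> (0 < d)%N -> F.@[0 : vec3 K] = 0.
Proof.
move=> F_homog d_gt0; rewrite -(scale0v (0 : vec3 K)) (meval_dhomogZ _ _ F_homog).
by rewrite expr0n gtn_eqF // mul0r.
Qed.

Lemma meval_linear_form l x : (linear_form l).@[x] = dot l x.
Proof.
rewrite /linear_form (big_morph _ (mevalD x) (meval0 x)).
by apply: eq_bigr => i _; rewrite mevalZ mevalXU.
Qed.

Lemma msize_linear_form l : (msize (linear_form l) <= 2)%N.
Proof.
apply: (big_ind (fun p : {mpoly K[3]} => msize p <= 2)%N) => [|p p' ? ? /=|i _].
- by rewrite msize0.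
- by apply: leq_trans (msizeD_le _ _) _; rewrite geq_max; apply/andP.
- by apply: leq_trans (msizeZ_le _ _) _; rewrite msizeX mdeg1.
Qed.

(* Substituting X_i - c_i l(X), with l(c) = 1, maps F to a polynomial congruent to F
   modulo l(X) that factors through the plane l = 0. *)
Lemma dvd_linear_form l F : l != 0 -> (msize F <= q)%N ->
  (forall x, dot l x = 0 -> F.@[x] = 0) -> exists G, F = linear_form l * G.
Proof.
move=> l_nz size_F F_vanish; have [i li_nz] := ffun_neq0 l_nz.
have [c lc] : exists c, dot l c = 1.
  by exists (scalev (l i)^-1 (delta i)); rewrite dotZr dot_deltar mulVf.
pose t := [tuple 'X_j - c j *: linear_form l | j < 3].
have [G FG] : eqmod (linear_form l) F (F \mPo t).
  apply: comp_mpoly_eqmod => j; rewrite tnth_mktuple.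
  by exists (c j)%:MP; rewrite opprB addrC subrK mulrC mul_mpolyC.
suff t0 : F \mPo t = 0 by exists G; rewrite -FG t0 subr0.
apply: vanishing_mpoly_eq0.
  apply: leq_trans (msize_comp_mpoly_leq _ _) size_F => j; rewrite tnth_mktuple.
  apply: leq_trans (msizeD_le _ _) _; rewrite msizeN geq_max msizeX mdeg1 /=.
  exact: leq_trans (msizeZ_le _ _) (msize_linear_form l).
move=> x; rewrite comp_mpoly_meval (@meval_eq _ _ _ [ffun j => x j - c j * dot l x]).
  apply: F_vanish; transitivity (dot l x - dot l c * dot l x); last by rewrite lc mul1r subrr.
  by rewrite !dotE !ffunE; ring.
by move=> j; rewrite /= tnth_mktuple ffunE mevalB mevalXU mevalZ meval_linear_form.
Qed.

End LinearForms.

Section LinesMeetingTheCurve.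
Variables (K : finFieldType) (F : {mpoly K[3]}).
Local Notation q := #|K|.
Hypothesis F_homog : F \is q.-1.-homog.
Implicit Types (l x P : vec3 K).

Lemma sum_meval_line l : \sum_(P | normalized P && (dot l P == 0)) F.@[P] = 0.
Proof.
have size_FL : (msize (F * (1 - linear_form l ^+ q.-1)) <= 3 * q.-1)%N.
  have size_ind : (msize (1 - linear_form l ^+ q.-1) <= q.-1.+1)%N.
    apply: leq_trans (msizeD_le _ _) _; rewrite msizeN msize1 geq_max /=.
    apply: leq_trans (msizeX_leq _ _) _; rewrite ltnS -[leqRHS]mul1n leq_mul //.
    by rewrite -subn1 leq_subLR; apply: msize_linear_form.
  apply: leq_trans (msizeM_leq _ _) _; move: (msize_dhomog F_homog) size_ind.
  (* [set] merges differently elaborated copies of the two sizes for [lia] *)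
  set a := msize F; set b := msize (1 - _).
  by have := card_finField_pred_gt0 K; lia.
(* 1 - l(x)^(q-1) is the indicator function of the plane l = 0 *)
have := sum_meval_eq0 size_FL.
rewrite (eq_bigr (fun x => if dot l x == 0 then F.@[x] else 0)) => [|x _]; last first.
  rewrite mevalM mevalB meval1 rmorphXn /= meval_linear_form.
  have [->|lx_nz] := eqVneq (dot l x) 0; last by rewrite expf_card_pred // subrr mulr0.
  by rewrite expr0n gtn_eqF ?card_finField_pred_gt0 // subr0 mulr1.
rewrite -big_mkcond (bigD1 (0 : vec3 K)) /=; last by rewrite dot0r.
rewrite (meval_dhomog0 F_homog (card_finField_pred_gt0 K)) add0r.
rewrite (eq_bigl (fun x => (x != 0) && (dot l x == 0))) => [|x]; last by rewrite andbC.
rewrite (@sum_scale_invariant _ _ (fun x => dot l x == 0)) => [|c x _ /eqP lx0|c x c_nz].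
- by rewrite -mulr_natr natr_card_pred mulrN1 => /eqP; rewrite oppr_eq0 => /eqP.
- by rewrite dotZr lx0 mulr0.
- by rewrite (meval_dhomogZ _ _ F_homog) expf_card_pred // mul1r.
Qed.

Lemma meval_line_eq0 l : normalized l -> (q <= pts_on_line F l)%N ->
  forall P, normalized P -> dot l P = 0 -> F.@[P] = 0.
Proof.
move=> nl many_pts; set W := [set P | normalized P && (dot l P == 0)].
set Z := [set P : vec3 K | F.@[P] == 0].
have WZ : pts_on_line F l = #|W :&: Z| by apply: eq_card => P; rewrite !inE andbAC.
have few_off : (#|W :\: Z| <= 1)%N.
  have := cardsID Z W; have := card_line_le (normalized_neq0 nl); rewrite -/W -WZ.
  by move: many_pts; lia.
have off_sum : \sum_(P in W :\: Z) F.@[P] = 0.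
  have : \sum_(P in W) F.@[P] = 0.
    by rewrite -[RHS](sum_meval_line l); apply: eq_bigl => P; rewrite inE.
  by rewrite (big_setID Z) /= big1 ?add0r // => P; rewrite !inE => /andP[_ /eqP].
have W_Z : W :\: Z = set0.
  move: few_off; rewrite leq_eqVlt ltnS leqn0 cards_eq0 => /orP[/cards1P[w W_Z] | /eqP //].
  move: off_sum; rewrite W_Z big_set1 => Fw.
  have : w \in W :\: Z by rewrite W_Z set11.
  by rewrite !inE Fw eqxx.
move=> P nP /eqP lP; apply/eqP; have : P \notin W :\: Z by rewrite W_Z inE.
by rewrite !inE nP lP /= andbT negbK.
Qed.

Lemma pts_on_line_le l : ~ has_Fq_linear_component F -> normalized l ->
  (pts_on_line F l <= q.-1)%N.
Proof.
move=> no_lin nl; rewrite leqNgt; apply/negP => many_pts; apply: no_lin.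
have q_gt0 : (0 < q)%N by apply: ltnW (finNzRing_gt1 K).
have l_nz := normalized_neq0 nl.
have size_F : (msize F <= q)%N by rewrite -(prednK q_gt0) msize_dhomog.
have plane_vanish x : dot l x = 0 -> F.@[x] = 0.
  have [-> _ | x_nz lx] := eqVneq x 0.
    exact: meval_dhomog0 F_homog (card_finField_pred_gt0 K).
  rewrite -(scalev_pivot_normalize x_nz) (meval_dhomogZ _ _ F_homog).
  rewrite (meval_line_eq0 nl) ?mulr0 ?normalize_normalized //; first by rewrite -(prednK q_gt0).
  by rewrite dotZr lx mulr0.
have [G FG] := dvd_linear_form l_nz size_F plane_vanish.
by exists l, G.
Qed.

End LinesMeetingTheCurve.

Lemma card_set_sum (T : finType) (A : {set T}) (b : pred T) :
  #|[set x in A | b x]| = (\sum_(x in A) b x)%N.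
Proof.
rewrite -sum1_card big_mkcond [RHS]big_mkcond; apply: eq_bigr => x _.
by rewrite inE; case: (x \in A); case: (b x).
Qed.

Lemma exchange_sum_card (T U : finType) (A : {set T}) (B : {set U}) (R : T -> U -> bool) :
  (\sum_(x in A) #|[set y in B | R x y]| = \sum_(y in B) #|[set x in A | R x y]|)%N.
Proof.
under eq_bigr do rewrite card_set_sum.
by rewrite exchange_big; apply: eq_bigr => y _; rewrite card_set_sum.
Qed.

Section BoundedSums.
Variables (T : finType) (L : {set T}) (f : T -> nat) (m : nat).
Hypothesis f_le : forall l, l \in L -> (f l <= m.+1)%N.

Let f_le_top l : l \in L -> (f l <= m + (f l == m.+1))%N.
Proof. by move/f_le; case: eqP => [-> | ne] fl; rewrite ?addn1 ?addn0 //; lia. Qed.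

Let sum_top : (\sum_(l in L) (m + (f l == m.+1)) = #|L| * m + #|[set l in L | f l == m.+1]|)%N.
Proof. by rewrite big_split sum_nat_const card_set_sum. Qed.

Lemma sum_leq_count_top :
  (\sum_(l in L) f l <= #|L| * m + #|[set l in L | f l == m.+1]|)%N.
Proof. by rewrite -sum_top; apply: leq_sum => l; apply: f_le_top. Qed.

Lemma sum_eq_count_top :
  (\sum_(l in L) f l = #|L| * m + #|[set l in L | f l == m.+1]|)%N ->
  forall l, l \in L -> f l = m.+1 \/ f l = m.
Proof.
rewrite -sum_top => sum_eq l lL.
have : (\sum_(l in L) (m + (f l == m.+1) - f l) == 0)%N.
  by rewrite sumnB ?sum_eq ?subnn // => l'; apply: f_le_top.
rewrite sum_nat_eq0 => /forall_inP/(_ l lL)/eqP; have := f_le lL.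
by case: (f l =P m.+1) => [|ne]; [left | rewrite addn0; right; lia].
Qed.

End BoundedSums.

Section PencilOfLines.
Variable K : finFieldType.
Local Notation q := #|K|.
Implicit Types (F : {mpoly K[3]}) (l P Q : vec3 K).

Definition lines_through P := [set l : vec3 K | normalized l && incident l P].

Lemma psiE F i P : psi F i P = #|[set l in lines_through P | pts_on_line F l == i]|.
Proof. by apply: eq_card => l; rewrite !inE andbA. Qed.

Lemma card_lines_through_le P : normalized P -> (#|lines_through P| <= q.+1)%N.
Proof.
move=> nP; apply: leq_trans (card_line_le (normalized_neq0 nP)).
by apply/subset_leq_card/subsetP => l; rewrite !inE incidentE dotC.
Qed.

Lemma card_lines_through_two P Q : normalized P -> normalized Q -> P != Q ->
  #|[set l in lines_through P | incident l Q]| = 1%N.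
Proof.
move=> nP nQ PQ; have [l /and3P[nl lP lQ]] := exists_line_through nP nQ PQ.
apply/eqP/cards1P; exists l; apply/setP => l'; rewrite !inE.
apply/idP/eqP => [/andP[/andP[nl' l'P] l'Q] | ->]; last by rewrite nl lP lQ.
exact: line_through_unique nl nl' nP nQ PQ lP lQ l'P l'Q.
Qed.

Lemma normalized_ratpts F P : P \in ratpts F -> normalized P.
Proof. by rewrite inE => /andP[]. Qed.

Lemma pts_on_line_gt0 F l P : P \in ratpts F -> incident l P -> (0 < pts_on_line F l)%N.
Proof. by move=> PX lP; apply/card_gt0P; exists P; rewrite inE PX. Qed.

Lemma sum_lines_through_pts F P : P \in ratpts F ->
  (\sum_(l in lines_through P) (pts_on_line F l).-1)%N = (Nq F).-1.
Proof.
move=> PX; have nP := normalized_ratpts PX.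
transitivity (\sum_(l in lines_through P) #|[set Q in ratpts F :\ P | incident l Q]|)%N.
  apply: eq_bigr => l; rewrite inE => /andP[_ lP].
  rewrite /pts_on_line (cardsD1 P) inE PX lP /=.
  by apply: eq_card => Q; rewrite !inE andbA.
rewrite exchange_sum_card /Nq (cardsD1 P) PX /= -sum1_card.
apply: eq_bigr => Q; rewrite !inE => /andP[QP /andP[nQ _]].
by rewrite card_lines_through_two // eq_sym.
Qed.

Lemma sum_psi F i : (\sum_(P in ratpts F) psi F i P = a_ F i * i)%N.
Proof.
set A := [set l | normalized l & pts_on_line F l == i].
transitivity (\sum_(P in ratpts F) #|[set l in A | incident l P]|)%N.
  by apply: eq_bigr => P _; apply: eq_card => l; rewrite !inE andbA andbAC.
rewrite -exchange_sum_card -sum_nat_const.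
apply: eq_bigr => l; rewrite inE => /andP[_ /eqP <-].
by apply: eq_card => P; rewrite !inE.
Qed.

End PencilOfLines.

Section PencilsThroughRationalPoints.
Variables (K : finFieldType) (F : {mpoly K[3]}) (q : nat).
Hypotheses (card_K : #|K| = q) (q_gt2 : (2 < q)%N) (F_homog : F \is q.-1.-homog).
Hypotheses (no_lin : ~ has_Fq_linear_component F) (NqF : Nq F = (q.-1 ^ 2)%N).

Let F_homogK : F \is #|K|.-1.-homog. Proof. by rewrite card_K. Qed.

Let f l := (pts_on_line F l).-1.

Let f_le P : P \in ratpts F -> forall l, l \in lines_through P -> (f l <= (q - 3).+1)%N.
Proof.
move=> _ l; rewrite inE => /andP[nl _].
by have := pts_on_line_le F_homogK no_lin nl; rewrite card_K /f; lia.
Qed.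

Let sum_f P : P \in ratpts F -> (\sum_(l in lines_through P) f l = q * (q - 2))%N.
Proof. by move=> PX; rewrite sum_lines_through_pts // NqF; nia. Qed.

Let psi_top P : P \in ratpts F ->
  #|[set l in lines_through P | f l == (q - 3).+1]| = psi F q.-1 P.
Proof.
move=> PX; rewrite psiE; apply: eq_card => l; rewrite !inE.
case lP: (normalized l && incident l P) => //=; case/andP: lP => _ lP.
by have := pts_on_line_gt0 PX lP; rewrite /f => ?; apply/eqP/eqP; lia.
Qed.

Let card_lines_through P : P \in ratpts F -> (#|lines_through P| <= q.+1)%N.
Proof. by move=> PX; rewrite -card_K card_lines_through_le ?(normalized_ratpts PX). Qed.

Lemma psi_ge3 P : P \in ratpts F -> (3 <= psi F q.-1 P)%N.
Proof.
move=> PX; have := sum_leq_count_top (f_le PX); rewrite sum_f // psi_top //.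
by have := card_lines_through PX; nia.
Qed.

Lemma a_pred_ge : (3 * q.-1 <= a_ F q.-1)%N.
Proof.
have : (\sum_(P in ratpts F) 3 <= \sum_(P in ratpts F) psi F q.-1 P)%N.
  by apply: leq_sum => P; apply: psi_ge3.
rewrite sum_psi sum_nat_const -/(Nq F) NqF -(@leq_pmul2r q.-1); last by lia.
by nia.
Qed.

Lemma pencil_of_psi_eq3 P : (3 < q)%N -> P \in ratpts F -> psi F q.-1 P = 3 ->
  #|lines_through P| = q.+1 /\
  forall l, l \in lines_through P -> pts_on_line F l = q.-1 \/ pts_on_line F l = (q - 2)%N.
Proof.
move=> q_gt3 PX psi3; have := sum_leq_count_top (f_le PX).
rewrite sum_f // psi_top // psi3 => sum_le.
have LP_eq : #|lines_through P| = q.+1 by have := card_lines_through PX; nia.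
have sum_eq : (\sum_(l in lines_through P) f l =
    #|lines_through P| * (q - 3) + #|[set l in lines_through P | f l == (q - 3).+1]|)%N.
  by rewrite sum_f // psi_top // psi3 LP_eq; nia.
split=> // l lP; have l_inc : incident l P by move: lP; rewrite inE => /andP[].
have := pts_on_line_gt0 PX l_inc; have := sum_eq_count_top (f_le PX) sum_eq lP.
by rewrite /f; lia.
Qed.

Lemma psi_sub2_of_psi_eq3 P : (3 < q)%N -> P \in ratpts F -> psi F q.-1 P = 3 ->
  psi F (q - 2) P = (q - 2)%N.
Proof.
move=> q_gt3 PX psi3; have [LP_eq LP_pts] := pencil_of_psi_eq3 q_gt3 PX psi3.
have := cardsID [set l | pts_on_line F l == q.-1] (lines_through P).
have -> : #|lines_through P :&: [set l | pts_on_line F l == q.-1]| = psi F q.-1 P.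
  by rewrite psiE; apply: eq_card => l; rewrite !inE.
have -> : #|lines_through P :\: [set l | pts_on_line F l == q.-1]| = psi F (q - 2) P.
  rewrite psiE; apply: eq_card => l; rewrite !inE andbC.
  case: (boolP (normalized l && incident l P)) => //= lP.
  have : l \in lines_through P by rewrite inE.
  by case/LP_pts => ->; apply/idP/idP => [/eqP ne | /eqP eq]; apply/eqP; lia.
by rewrite LP_eq psi3; lia.
Qed.

End PencilsThroughRationalPoints.

Theorem lemma3p7 (K : finFieldType) (F : {mpoly K[3]}) :
  (5 <= #|K|)%N ->
  F != 0 ->
  F \is (#|K| - 1)%N.-homog ->
  ~ has_Fq_linear_component F ->
  Nq F = ((#|K| - 1) ^ 2)%N ->
  (forall P, P \in ratpts F -> (3 <= psi F (#|K| - 1) P)%N) /\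
  (3 * (#|K| - 1) <= a_ F (#|K| - 1))%N /\
  (forall P, P \in ratpts F -> psi F (#|K| - 1) P = 3%N ->
     psi F (#|K| - 2) P = (#|K| - 2)%N /\
     (forall l : vec3 K, normalized l -> incident l P ->
        pts_on_line F l = (#|K| - 1)%N \/ pts_on_line F l = (#|K| - 2)%N)).
Proof.
move=> q_ge5 _; rewrite subn1 => F_homog no_lin NqF.
have q_gt3 : (3 < #|K|)%N by apply: leq_trans q_ge5.
have q_gt2 := ltnW q_gt3.
split; first by move=> P; apply: (psi_ge3 erefl q_gt2 F_homog no_lin NqF).
split; first exact: (a_pred_ge erefl q_gt2 F_homog no_lin NqF).
move=> P PX psi3; split; first exact: (psi_sub2_of_psi_eq3 erefl q_gt2 F_homog no_lin NqF).
have [_ LP_pts] := pencil_of_psi_eq3 erefl q_gt2 F_homog no_lin NqF q_gt3 PX psi3.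
by move=> l nl lP; apply: LP_pts; rewrite inE nl lP.
Qed.
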